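(* Let $C$ be a subcubic chain of a graph $G$ and let $e$ be a cut-edge of $C$. Then $\delta(G,e)=\delta(G/C,e_{G/C})+\delta(\overline C,e_C)$ and $\widehat\delta(G,e)=\widehat\delta(G/C,e_{G/C})+\widehat\delta(\overline C,e_C)$.
   Context: Graphs are finite and may have loops and parallel edges unless called simple; a loop contributes 2 to the degree of its vertex, and a graph is subcubic if every vertex has degree at most 3. $n(G)$ is the number of vertices of $G$ and $n_2(G)$ the number of vertices of degree 2. A cycle is a connected 2-regular subgraph (so a loop, or a pair of parallel edges, forms a cycle). An even cover of $G$ is a spanning subgraph $F$ in which every vertex has degree 0 or 2; its excess is $\mathrm{exc}(F)=2c(F)+i(F)$, where $c(F)$ is the number of cycles and $i(F)$ the number of isolated vertices of $F$. For $e\in E(G)$, let $\mathcal E(G,e)$ (resp. $\widehat{\mathcal E}(G,e)$) be the set of even covers of $G$ containing (resp. not containing) $e$, and define $\mathrm{exc}(G,e)=\min_{F\in\mathcal E(G,e)}\mathrm{exc}(F)-2$, $\widehat{\mathrm{exc}}(G,e)=\min_{F\in\widehat{\mathcal E}(G,e)}\mathrm{exc}(F)$, $\delta(G,e)=\mathrm{exc}(G,e)-\frac{n(G)+n_2(G)}4$, $\widehat\delta(G,e)=\widehat{\mathrm{exc}}(G,e)-\frac{n(G)+n_2(G)}4$. A subcubic chain is a simple connected subcubic graph $C$ written as an alternating sequence $C=x e_0 B_1 e_1 B_2\cdots B_k e_k y$ ($k\ge 0$) such that: $\{e_0,\dots,e_k\}$ is exactly the set of cut-edges of $C$; the connected components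 of $C-\{e_0,\dots,e_k\}$ are $B_0,B_1,\dots,B_{k+1}$ with $V(B_0)=\{x\}$, $V(B_{k+1})=\{y\}$; each $B_i$ ($1\le i\le k$) is a single vertex or 2-connected; and $e_i$ joins a vertex of $B_i$ to a vertex of $B_{i+1}$ ($0\le i\le k$). Its endpoints are $x,y$ and its end edges are $e_0,e_k$. It is trivial if $k=0$. If $k\ge1$, let $x_1$ be the endpoint of $e_0$ in $B_1$ and $y_k$ the endpoint of $e_k$ in $B_k$; the closure of $C$ is $(\overline C,e_C)$ where $\overline C$ is obtained from $C-\{x,y\}$ by adding a new edge $e_C=x_1y_k$. If $G$ is a graph and $C=xe_0B_1\cdots B_ke_ky$ is a nontrivial subcubic chain contained in $G$ such that $C-\{x,y\}$ is a connected component of $G-\{e_0,e_k\}$, then $C$ is a subcubic chain of $G$; $G/C$ denotes the graph obtained from $G$ by deleting $V(C)\setminus\{x,y\}$ and adding a new edge $e_{G/C}$ joining $x$ and $y$. *)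

From HB Require Import structures.
From mathcomp Require Import all_boot all_order all_algebra.
Set Implicit Arguments. Unset Strict Implicit. Unset Printing Implicit Defensive.
Import Order.TTheory GRing.Theory Num.Theory.

(** Finite multigraphs (loops and parallel edges allowed): every edge has a
    pair of ends; a loop is an edge whose two ends coincide. *)
Record mgraph := MGraph {
  vert : finType;
  edge : finType;
  ends : edge -> vert * vert }.

Section Basics.
Variable G : mgraph.
Implicit Types (v w : vert G) (g : edge G) (A F : {set edge G}) (S : {set vert G}).

(** number of ends of g at v (a loop contributes 2) *)
Definition incid g v : nat := ((ends g).1 == v) + ((ends g).2 == v).

Definition deg_in A v : nat := \sum_(g in A) incid g v.
Definition deg v : nat := deg_in [set: edge G] v.

Definition n_of : nat := #|vert G|.
Definition n2_of : nat := #|[set v | deg v == 2]|.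

Definition adjA A : rel (vert G) :=
  fun u v => [exists g in A, (ends g == (u, v)) || (ends g == (v, u))].
Definition adj_on S A : rel (vert G) :=
  fun u v => [&& u \in S, v \in S & adjA A u v].
Definition connected_on S A : bool :=
  [forall u in S, forall v in S, connect (adj_on S A) u v].

Definition is_even_cover F : bool :=
  [forall v, (deg_in F v == 0) || (deg_in F v == 2)].
(** cycles of F = connected components of (V,F) containing an edge *)
Definition ncyc F : nat :=
  #|[set [set w | connect (adjA F) v w] | v in [set v | deg_in F v != 0]]|.
Definition niso F : nat := #|[set v | deg_in F v == 0]|.
Definition exc F : nat := 2 * ncyc F + niso F.

(** minimum over options, None = +infinity *)
Definition omin (a b : option nat) : option nat :=
  match a, b with
  | None, _ => b
  | _, None => a
  | Some x, Some y => Some (minn x y)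
  end.

Definition minexc (P : pred {set edge G}) : option nat :=
  \big[omin/None]_(F : {set edge G} | is_even_cover F && P F) Some (exc F).

Definition base_val : rat := (n_of + n2_of)%:R / 4%:R.

(** delta(G,e) and delta-hat(G,e); None = +infinity (min over empty set) *)
Definition delta (e : edge G) : option rat :=
  omap (fun m : nat => (m%:R - 2%:R - base_val)%R) (minexc (fun F => e \in F)).
Definition deltahat (e : edge G) : option rat :=
  omap (fun m : nat => (m%:R - base_val)%R) (minexc (fun F => e \notin F)).

Definition is_cut_edge S A g : bool :=
  (g \in A) && ~~ connected_on S (A :\ g).

Definition other_end g v : vert G :=
  if (ends g).1 == v then (ends g).2 else (ends g).1.

(** (VC, EC) is a subcubic chain x e0 B1 e1 ... Bk ek y, k >= 1 *)
Definition subcubic_chain (VC : {set vert G}) (EC : {set edge G})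
    (x y : vert G) (e0 ek : edge G) : Prop :=
  exists (k : nat) (es : nat -> edge G) (Bs : nat -> {set vert G}),
  let CUT := [set g | is_cut_edge VC EC g] in
  let comp v := [set w | connect (adj_on VC (EC :\: CUT)) v w] in
  [/\ [/\
      (forall g, g \in EC -> (ends g).1 \in VC /\ (ends g).2 \in VC),
      (forall g, g \in EC -> (ends g).1 != (ends g).2),
      (forall g g', g \in EC -> g' \in EC ->
         (ends g' = ends g \/ ends g' = ((ends g).2, (ends g).1)) -> g = g'),
      connected_on VC EC &
      (forall v, v \in VC -> deg_in EC v <= 3)],
   [/\ 1 <= k, es 0 = e0, es k = ek &
      (forall g, is_cut_edge VC EC g <-> exists2 i, i <= k & g = es i)] &
   [/\
      (forall v, v \in VC -> exists2 i, i <= k.+1 & comp v = Bs i),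
      (forall i, i <= k.+1 -> exists2 v, v \in VC & Bs i = comp v),
      (forall i j, i <= k.+1 -> j <= k.+1 -> Bs i = Bs j -> i = j) &
   [/\ Bs 0 = [set x], Bs k.+1 = [set y],
      (* each B_i (1 <= i <= k) is a single vertex or 2-connected *)
      (forall i, 1 <= i <= k ->
         #|Bs i| = 1 \/
         (3 <= #|Bs i| /\ forall z, z \in Bs i ->
                             connected_on (Bs i :\ z) (EC :\: CUT))) &
      (forall i, i <= k ->
         ((ends (es i)).1 \in Bs i /\ (ends (es i)).2 \in Bs i.+1) \/
         ((ends (es i)).2 \in Bs i /\ (ends (es i)).1 \in Bs i.+1))]]].

(** C is a subcubic chain of G: moreover C - {x,y} is a connected component
    of G - {e0, ek} *)
Definition subcubic_chain_of (VC : {set vert G}) (EC : {set edge G})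
    (x y : vert G) (e0 ek : edge G) : Prop :=
  let I := VC :\: [set x; y] in
  [/\ subcubic_chain VC EC x y e0 ek,
      I != set0,
      connected_on I (~: [set e0; ek]) &
      (forall g, g != e0 -> g != ek ->
         ((ends g).1 \in I) || ((ends g).2 \in I) ->
         [&& (ends g).1 \in I, (ends g).2 \in I & g \in EC])].

End Basics.

(** Generic construction: keep the vertices of S (plus a and b), keep the
    edges of A with both ends in S, and add one new edge joining a and b. *)
Section RestrictAdd.
Variables (G : mgraph) (S : {set vert G}) (A : {set edge G}) (a b : vert G).

Definition ra_set : {set vert G} := a |: (b |: S).
Definition ra_vert := {v : vert G | v \in ra_set}.
Definition ra_edge := option {g : edge G | [&& g \in A, (ends g).1 \in S & (ends g).2 \in S]}.

Lemma ra_in v : v \in S -> v \in ra_set.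
Proof. by move=> h; rewrite !inE h !orbT. Qed.
Lemma ra_a : a \in ra_set.
Proof. by rewrite !inE eqxx. Qed.
Lemma ra_b : b \in ra_set.
Proof. by rewrite !inE eqxx !orbT. Qed.
Lemma ra_p1 g : [&& g \in A, (ends g).1 \in S & (ends g).2 \in S] -> (ends g).1 \in S.
Proof. by case/and3P. Qed.
Lemma ra_p2 g : [&& g \in A, (ends g).1 \in S & (ends g).2 \in S] -> (ends g).2 \in S.
Proof. by case/and3P. Qed.

Definition ra_ends (o : ra_edge) : ra_vert * ra_vert :=
  match o with
  | None => (exist _ a ra_a, exist _ b ra_b)
  | Some g => (exist _ (ends (val g)).1 (ra_in (ra_p1 (valP g))),
               exist _ (ends (val g)).2 (ra_in (ra_p2 (valP g))))
  end.

Definition restrict_add : mgraph := @MGraph ra_vert ra_edge ra_ends.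
Definition new_edge : edge restrict_add := None.
End RestrictAdd.

(** G/C : delete the interior V(C)\{x,y}, add e_{G/C} = xy *)
Definition contract_chain (G : mgraph) (VC : {set vert G}) (x y : vert G) :=
  restrict_add (~: (VC :\: [set x; y])) [set: edge G] x y.

(** closure of C : C - {x,y} plus e_C = x1 yk *)
Definition chain_closure (G : mgraph) (VC : {set vert G}) (EC : {set edge G})
    (x y : vert G) (e0 ek : edge G) :=
  restrict_add (VC :\: [set x; y]) EC (other_end e0 x) (other_end ek y).

Definition oaddq (a b : option rat) : option rat :=
  match a, b with Some p, Some q => Some (p + q)%R | _, _ => None end.

Definition e_contract (G : mgraph) (VC : {set vert G}) (x y : vert G)
  : edge (contract_chain VC x y) := None.
Definition e_closure (G : mgraph) (VC : {set vert G}) (EC : {set edge G})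
    (x y : vert G) (e0 ek : edge G) : edge (chain_closure VC EC x y e0 ek) := None.

From mathcomp Require Import all_boot all_order all_algebra.
From mathcomp Require Import zify lra.
Set Implicit Arguments. Unset Strict Implicit. Unset Printing Implicit Defensive.
Import GRing.Theory Num.Theory.

(* An even cover F of G splits into an even cover of G/C (the edges outside the
   interior I = V(C) \ {x, y}) and one of the closure of C (the edges inside I); the
   new edge of each side is taken exactly when e0 is in F.  Parity across the cuts
   I and B_1 u ... u B_i shows that e_k and every cut-edge of C are in F exactly when
   e0 is, and conversely every such pair of covers glues back into one of G.
   Isolated vertices are preserved, while a cycle through e0 and e_k is cut into
   one cycle on each side, so exc(F_{G/C}) + exc(F_C) = exc(F) + 2[e0 in F].  As
   n + n_2 is additive over V(G) = (V(G) \ I) u I, minimising the excess over covers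
   with a prescribed status of e yields both identities. *)

Lemma big_option {R : Type} {idx : R} {op : Monoid.com_law idx} (T : finType)
    (F : option T -> R) :
  \big[op/idx]_(o : option T) F o = op (F None) (\big[op/idx]_(t : T) F (Some t)).
Proof.
rewrite (bigD1 None) //=; congr (op _ _).
rewrite (reindex_omap Some (fun o => o)) //=; last by case.
by apply: eq_bigl => t; rewrite eqxx.
Qed.

Lemma big_sig {R : Type} {idx : R} {op : Monoid.com_law idx} (T : finType)
    (P : pred T) (F : T -> R) :
  \big[op/idx]_(u : {x | P x}) F (val u) = \big[op/idx]_(x | P x) F x.
Proof.
rewrite (reindex_omap (val : {x | P x} -> T) insub) /=; last first.
  by move=> i Pi; rewrite insubT.
by apply: eq_bigl => -[i Pi] /=; rewrite Pi insubT /= eqxx.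
Qed.

Lemma sum_eq_nat (T : finType) (A : {pred T}) (c : T) :
  \sum_(v in A) (c == v : nat) = (c \in A).
Proof.
rewrite big_mkcond (bigD1 c) //= eqxx big1 ?addn0; first by case: (c \in A).
by move=> v nv; rewrite eq_sym (negbTE nv); case: (v \in A).
Qed.

Lemma card_set_sum (T : finType) (p : pred T) : #|[set u | p u]| = \sum_u (p u : nat).
Proof. by rewrite -sum1dep_card big_mkcond; apply: eq_bigr => u _; case: (p u). Qed.

Lemma sum_inv_card (R : numFieldType) (T : finType) (C : {set T}) : C != set0 ->
  (\sum_(v in C) 1 / (#|C|)%:R = 1 :> R)%R.
Proof.
move=> Cn; rewrite sumr_const -[((_ / _) *+ _)%R]mulr_natr mul1r mulVf //.
by rewrite pnatr_eq0 -lt0n card_gt0.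
Qed.

Lemma connect_homo (T T' : finType) (r : rel T) (r' : rel T') (f : T -> T') :
  (forall x y, r x y -> connect r' (f x) (f y)) ->
  forall x y, connect r x y -> connect r' (f x) (f y).
Proof.
move=> h x y /connectP[p pth ->]; elim: p x pth => //= z p IH x /andP[rxz pth].
exact: connect_trans (h _ _ rxz) (IH _ pth).
Qed.

Lemma connect_set_eq (T : finType) (r : rel T) : symmetric r -> forall u v,
  connect r u v -> [set w | connect r u w] = [set w | connect r v w].
Proof.
move=> sr u v huv; apply/setP => w; rewrite !inE; apply/idP/idP => h.
  by apply: connect_trans h; rewrite (sym_connect_sym sr).
exact: connect_trans huv h.
Qed.

Definition crosses (G : mgraph) (S : {set vert G}) (g : edge G) : bool :=
  ((ends g).1 \in S) != ((ends g).2 \in S).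

(** * Even covers *)

Section EvenCovers.
Variable G : mgraph.
Implicit Types (F : {set edge G}) (S : {set vert G}) (g : edge G) (u v : vert G).

Lemma sum_deg_in F S :
  \sum_(v in S) deg_in F v = \sum_(g in F) (((ends g).1 \in S) + ((ends g).2 \in S)).
Proof.
rewrite /deg_in exchange_big /=; apply: eq_bigr => g _.
by rewrite /incid big_split /= !sum_eq_nat.
Qed.

(* The handshake lemma applied to the vertices of S. *)
Lemma even_cover_crossing_even F S : is_even_cover F ->
  ~~ odd #|[set g in F | crosses S g]|.
Proof.
move=> /forallP ev.
have even_deg : ~~ odd (\sum_(v in S) deg_in F v).
  apply: (big_ind (fun n => ~~ odd n)) => //.
    by move=> m n hm hn; rewrite oddD (negbTE hm) (negbTE hn).
  by move=> v _; case/orP: (ev v) => /eqP ->.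
have card_cross : #|[set g in F | crosses S g]| = \sum_(g in F) (crosses S g : nat).
  rewrite -sum1_card [LHS]big_mkcond [RHS]big_mkcond /=; apply: eq_bigr => g _.
  by rewrite inE; case: (g \in F); case: (crosses S g).
move: even_deg; rewrite sum_deg_in card_cross.
have -> : \sum_(g in F) (((ends g).1 \in S) + ((ends g).2 \in S)) =
  \sum_(g in F) (crosses S g : nat) +
  2 * \sum_(g in F) ((((ends g).1 \in S) && ((ends g).2 \in S)) : nat).
  rewrite big_distrr -big_split /=; apply: eq_bigr => g _.
  by rewrite /crosses; case: ((ends g).1 \in S); case: ((ends g).2 \in S).
by rewrite oddD oddM /= addbF.
Qed.

Lemma even_cover_crossing2 F S p q :
  is_even_cover F -> (forall g, crosses S g = (g == p) || (g == q)) ->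
  (p \in F) = (q \in F).
Proof.
move=> ev hc; have := even_cover_crossing_even S ev.
have -> : [set g in F | crosses S g] = F :&: [set p; q].
  by apply/setP => g; rewrite !inE hc.
case pF: (p \in F); case qF: (q \in F) => //.
- suff -> : F :&: [set p; q] = [set p] by rewrite cards1.
  apply/setP => g; rewrite !inE; case: (eqVneq g p) => [->|_]; first by rewrite pF.
  by case: (eqVneq g q) => [->|]; rewrite ?qF ?andbF.
- suff -> : F :&: [set p; q] = [set q] by rewrite cards1.
  apply/setP => g; rewrite !inE; case: (eqVneq g q) => [->|_]; first by rewrite qF orbT.
  by case: (eqVneq g p) => [->|]; rewrite ?pF ?orbF ?andbF.
Qed.

Lemma adjA_sym F : symmetric (adjA F).
Proof.
move=> u v; apply/existsP/existsP => -[g /andP[gF h]]; exists g;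
  by rewrite gF /= orbC.
Qed.

Lemma connect_adjA_sym F u v : connect (adjA F) u v = connect (adjA F) v u.
Proof. exact: (sym_connect_sym (@adjA_sym F)). Qed.

Lemma adj_on_sym S F : symmetric (adj_on S F).
Proof. by move=> u v; rewrite /adj_on adjA_sym andbCA. Qed.

Lemma adjA_ends F g : g \in F -> adjA F (ends g).1 (ends g).2.
Proof. by move=> gF; apply/existsP; exists g; rewrite gF -surjective_pairing eqxx. Qed.

Lemma connect_adjA_eq F u w1 w2 :
  adjA F w1 w2 -> connect (adjA F) u w1 = connect (adjA F) u w2.
Proof.
move=> h; apply/idP/idP => c; first exact: connect_trans c (connect1 h).
by apply: connect_trans c (connect1 _); rewrite adjA_sym.
Qed.

Lemma connect_on_mem S F u v : connect (adj_on S F) u v -> u \in S -> v \in S.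
Proof.
move/connectP=> [p pth ->]; elim: p u pth => //= z p IH u /andP[h pth] _.
by apply: (IH z pth); case/and3P: h.
Qed.

Lemma deg_in_neq0 F g v : g \in F -> incid g v != 0 -> deg_in F v != 0.
Proof.
move=> gF; rewrite /deg_in (bigD1 g) //= -!lt0n => h.
exact: leq_trans h (leq_addr _ _).
Qed.

Lemma adjA_deg_in F u v : adjA F u v -> deg_in F v != 0.
Proof.
case/existsP => g /andP[gF /orP[] /eqP E]; apply: (deg_in_neq0 gF);
  by rewrite /incid E /= eqxx ?addn1.
Qed.

Lemma connect_deg_in F u v :
  connect (adjA F) u v -> deg_in F u != 0 -> deg_in F v != 0.
Proof.
move/connectP=> [p pth ->]; elim: p u pth => //= z p IH u /andP[h pth] _.
exact: (IH z pth (adjA_deg_in h)).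
Qed.

Local Notation comp F v := [set w | connect (adjA F) v w].

Lemma ncyc_sum F :
  ((ncyc F)%:R = \sum_(v | deg_in F v != 0) 1 / #|comp F v|%:R :> rat)%R.
Proof.
set P := [set v | deg_in F v != 0].
rewrite (eq_bigl (mem P)); last by move=> v; rewrite /= inE.
rewrite (partition_big_imset (fun v => comp F v)) /=.
rewrite /ncyc -/P -sum1_card natr_sum; apply: eq_bigr => C /imsetP[v0 v0P ->].
rewrite (eq_bigr (fun _ => 1 / #|comp F v0|%:R))%R; last by move=> v /andP[_ /eqP ->].
rewrite -[LHS](@sum_inv_card rat _ (comp F v0)); last first.
  by apply/set0Pn; exists v0; rewrite inE connect0.
apply: eq_bigl => v; rewrite [in LHS]inE; apply/idP/andP => [h|[_ /eqP E]].
  split; first by rewrite inE; apply: (connect_deg_in h); rewrite inE in v0P.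
  by rewrite (connect_set_eq (@adjA_sym F) h).
have : v0 \in comp F v by rewrite E inE connect0.
by rewrite inE connect_adjA_sym.

Qed.

Lemma sum_comp_weight F a S : a \in S -> deg_in F a != 0 ->
  (\sum_(v in S | (deg_in F v != 0) && connect (adjA F) a v)
     1 / #|comp F v :&: S|%:R = 1 :> rat)%R.
Proof.
move=> aS Da.
rewrite (eq_bigr (fun _ => 1 / #|comp F a :&: S|%:R))%R; last first.
  by move=> v /andP[_ /andP[_ h]]; rewrite (connect_set_eq (@adjA_sym F) h).
rewrite (eq_bigl (mem (comp F a :&: S))); last first.
  move=> v; rewrite /= !inE; apply/andP/andP => [[vS /andP[_ c]]|[c vS]] //.
  by split=> //; rewrite c andbT; apply: connect_deg_in c Da.
by rewrite sum_inv_card //; apply/set0Pn; exists a; rewrite !inE connect0.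
Qed.

Lemma ncyc_sum_without F a (c : bool) : (c -> deg_in F a != 0) ->
  ((ncyc F)%:R = \sum_(v | (deg_in F v != 0) && ~~ (c && connect (adjA F) a v))
      1 / #|comp F v|%:R + (c : nat)%:R :> rat)%R.
Proof.
move=> hc; rewrite ncyc_sum (bigID (fun v => c && connect (adjA F) a v)) /= addrC.
congr (_ + _)%R; case: c hc => /= [Da|_]; last by rewrite big_pred0 // => v; rewrite andbF.
rewrite -[RHS](sum_comp_weight (in_setT a) (Da isT)).
by apply: eq_big => [v|v _]; rewrite ?in_setT ?setIT.
Qed.
End EvenCovers.

(** * Restricting an even cover to one side of a two-edge cut *)

Section Restriction.
Variables (G : mgraph) (S : {set vert G}) (A : {set edge G}) (a b : vert G) (c1 c2 : edge G).
Hypotheses (inner_in_A : forall g, (ends g).1 \in S -> (ends g).2 \in S -> g \in A)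
 (aS : a \in S) (bS : b \in S)
 (crossS : forall g, crosses S g = (g == c1) || (g == c2))
 (c1_neq_c2 : c1 != c2)
 (c1_at_a : forall v, v \in S -> incid c1 v = (v == a))
 (c2_at_b : forall v, v \in S -> incid c2 v = (v == b)).

Local Notation GS := (restrict_add S A a b).

Lemma ra_set_id : ra_set S a b = S.
Proof.
by apply/setP => v; rewrite !inE; case: eqP => [->|]; case: eqP => [->|] //=;
  rewrite ?aS ?bS.
Qed.

Lemma val_in_S (u : vert GS) : val u \in S.
Proof. by case: u => w /=; rewrite ra_set_id. Qed.

Definition restrict_cover (F : {set edge G}) : {set edge GS} :=
  [set o : edge GS | if o is Some g then val g \in F else c1 \in F].

Lemma incid_Some (g : {g | [&& g \in A, (ends g).1 \in S & (ends g).2 \in S]}) (u : vert GS) :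
  incid (Some g : edge GS) u = incid (val g) (val u).
Proof. by rewrite /incid /= -!val_eqE. Qed.

Lemma incid_None (u : vert GS) :
  incid (None : edge GS) u = (a == val u) + (b == val u).
Proof. by rewrite /incid /= -!val_eqE. Qed.

Local Notation inner g := [&& g \in A, (ends g).1 \in S & (ends g).2 \in S].

Lemma incid_split g v : v \in S -> incid g v =
  (if inner g then incid g v else 0) + (if g == c1 then incid g v else 0) +
  (if g == c2 then incid g v else 0).
Proof.
move=> vS; have := crossS g; rewrite /crosses.
case P: (inner g).
  case/and3P: P => _ e1 e2; rewrite e1 e2 /= => /esym/norP[/negbTE-> /negbTE->].
  by rewrite !addn0.
have [->|n1] := eqVneq g c1; first by rewrite (negbTE c1_neq_c2) addn0.
have [->|n2] //= := eqVneq g c2; rewrite !addn0 => hc.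
rewrite /incid; move: P hc; case e1: ((ends g).1 \in S); case e2: ((ends g).2 \in S) => //=.
  by rewrite inner_in_A.
move=> _ _; case: eqP => [E|_]; first by move: vS; rewrite -E e1.
by case: eqP => [E|_] //; move: vS; rewrite -E e2.
Qed.

Lemma deg_restrict_cover (F : {set edge G}) : (c1 \in F) = (c2 \in F) -> forall u,
  deg_in (restrict_cover F) u = deg_in F (val u).
Proof.
move=> c1F_c2F u; have vS := val_in_S u.
pose f g := if g \in F then incid g (val u) else 0.
rewrite /deg_in big_mkcond big_option /= inE incid_None.
rewrite (eq_bigr (fun t => f (val t))); last by move=> t _; rewrite inE incid_Some.
rewrite (big_sig (fun g => inner g) f) [RHS]big_mkcond /=.
rewrite [RHS](eq_bigr (fun g => (if inner g then f g else 0) + (if g == c1 then f g else 0)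
  + (if g == c2 then f g else 0))); last first.
  by move=> g _; rewrite /f {1}(incid_split g vS); case: (g \in F); rewrite ?if_same.
rewrite !big_split /= -!big_mkcond !big_pred1_eq /f -c1F_c2F c1_at_a // c2_at_b //.
by case: (c1 \in F); rewrite ?add0n ?addn0 // addnC addnA (eq_sym a) (eq_sym b).
Qed.

Definition ua : vert GS := exist _ a (ra_a S a b).
Definition ub : vert GS := exist _ b (ra_b S a b).
Definition lift_vert (v : vert G) : vert GS := odflt ua (insub v).

Lemma lift_vertK v : v \in S -> val (lift_vert v) = v.
Proof. by move=> vS; rewrite /lift_vert insubT ?ra_in //. Qed.

Lemma val_lift_vert (u : vert GS) : lift_vert (val u) = u.
Proof. by apply: val_inj; rewrite lift_vertK ?val_in_S. Qed.

Lemma lift_vert_a : lift_vert a = ua.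
Proof. by apply: val_inj; rewrite lift_vertK. Qed.
Lemma lift_vert_b : lift_vert b = ub.
Proof. by apply: val_inj; rewrite lift_vertK. Qed.

Lemma crossing_end c s : s \in S -> crosses S c ->
  incid c s = 1 -> exists s', s' \notin S /\ (ends c = (s, s') \/ ends c = (s', s)).
Proof.
move=> sS; rewrite /crosses /incid; case: (ends c) => p q /=.
case: (eqVneq p s) => [->|ps]; case: (eqVneq q s) => [->|qs] //=; rewrite ?sS //.
  by move=> qS _; exists q; split => //; left.
by move=> pS _; exists p; split => //; [by move: pS; case: (p \in S) | right].
Qed.

Lemma c1_ends : exists a', a' \notin S /\ (ends c1 = (a, a') \/ ends c1 = (a', a)).
Proof. by apply: crossing_end => //; [rewrite crossS eqxx | rewrite c1_at_a ?eqxx]. Qed.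
Lemma c2_ends : exists b', b' \notin S /\ (ends c2 = (b, b') \/ ends c2 = (b', b)).
Proof. by apply: crossing_end => //; [rewrite crossS eqxx orbT | rewrite c2_at_b ?eqxx]. Qed.

Section Cover.
Variable F : {set edge G}.
Hypotheses (evF : is_even_cover F) (c1F_c2F : (c1 \in F) = (c2 \in F)).

(* The cycle of F through c1 leaves S and can only come back through c2. *)
Lemma connect_a_b : c1 \in F -> connect (adjA F) a b.
Proof.
move=> c1F.
set W := [set w | connect (adjA F) a w]; set S' := W :&: S.
set X := [set g in F | ((ends g).1 \in S') != ((ends g).2 \in S')].
have hp : ~~ odd #|X| by apply: even_cover_crossing_even.
have inW g : g \in F -> ((ends g).1 \in W) = ((ends g).2 \in W).
  by move=> gF; rewrite !inE; apply: connect_adjA_eq; apply: adjA_ends.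
have Xsub g : g \in X -> (g == c1) || (g == c2).
  rewrite inE => /andP[gF]; rewrite -crossS /crosses !inE.
  have := inW g gF; rewrite !inE => ->.
  by case: (connect _ _ _).
have c1X : c1 \in X.
  rewrite inE c1F /=; case: c1_ends => a' [a'S [] E]; rewrite E /= !inE aS andbT
   (negbTE a'S) andbF connect0 //.
have c2X : c2 \in X.
  apply: contraTT hp => c2X; have -> : X = [set c1].
    apply/setP => g; rewrite inE; apply/idP/idP => [gX|/eqP->//].
    by case/orP: (Xsub g gX) => // /eqP E; move: c2X; rewrite -E gX.
  by rewrite cards1.
move: c2X; rewrite inE => /andP[_]; case: c2_ends => b' [b'S [] E]; rewrite E /= !inE
  (negbTE b'S) !andbF.
  by rewrite bS andbT; case: (connect _ _ _).
by rewrite bS andbT; case: (connect _ _ _).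
Qed.

Lemma adjA_new_edge : c1 \in F -> adjA (restrict_cover F) ua ub.
Proof. by move=> c1F; apply/existsP; exists None; rewrite inE c1F eqxx. Qed.

Lemma adjA_restrict_edge g : g \in F -> (ends g).1 \in S -> (ends g).2 \in S ->
  adjA (restrict_cover F) (lift_vert (ends g).1) (lift_vert (ends g).2).
Proof.
move=> gF e1S e2S.
have P : [&& g \in A, (ends g).1 \in S & (ends g).2 \in S] by rewrite inner_in_A ?e1S ?e2S.
apply/existsP; exists (Some (exist _ g P)); rewrite inE /= gF /=.
by rewrite xpair_eqE -!val_eqE /= !lift_vertK // !eqxx.
Qed.

Lemma connect_restrict_up (u w : vert GS) :
  connect (adjA (restrict_cover F)) u w -> connect (adjA F) (val u) (val w).
Proof.
apply: connect_homo => p q /existsP[[s|] /andP[oF /orP[]/eqP E]].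
- rewrite inE /= in oF; case: E => <- <- /=; apply: connect1.
  exact: (adjA_ends oF).
- rewrite inE /= in oF; case: E => <- <- /=; apply: connect1.
  by rewrite adjA_sym; exact: (adjA_ends oF).
- rewrite inE /= in oF; case: E => <- <- /=; exact: connect_a_b.
- rewrite inE /= in oF; case: E => <- <- /=; rewrite connect_adjA_sym; exact: connect_a_b.
Qed.

Lemma crossing_reaches_a g p : g \in F -> crosses S g ->
  (p == (ends g).1) || (p == (ends g).2) -> p \in S ->
  c1 \in F /\ (forall u, connect (adjA (restrict_cover F)) u (lift_vert p) =
                         connect (adjA (restrict_cover F)) u ua).
Proof.
move=> gF cr pe pS; rewrite crossS in cr.
case/orP: cr => /eqP Eg; subst g.
  have pa : p = a.
    by case: c1_ends pe => a' [a'S [] ->] /= /orP[]/eqP // Ep; rewrite Ep (negbTE a'S) in pS.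
  by split=> // u; rewrite pa lift_vert_a.
split; first by rewrite c1F_c2F.
move=> u; have c1F : c1 \in F by rewrite c1F_c2F.
have -> : lift_vert p = ub.
  have pb : p = b.
    by case: c2_ends pe => b' [b'S [] ->] /= /orP[]/eqP // Ep; rewrite Ep (negbTE b'S) in pS.
  by rewrite pb lift_vert_b.
by rewrite (connect_adjA_eq u (adjA_new_edge c1F)).
Qed.

Lemma connect_restrict_down (u : vert GS) v : connect (adjA F) (val u) v ->
  if v \in S then connect (adjA (restrict_cover F)) u (lift_vert v)
  else (c1 \in F) && connect (adjA (restrict_cover F)) u ua.
Proof.
pose Z := [pred v | if v \in S then connect (adjA (restrict_cover F)) u (lift_vert v)
  else (c1 \in F) && connect (adjA (restrict_cover F)) u ua].
have step g : g \in F -> ((ends g).1 \in Z) = ((ends g).2 \in Z).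
  move=> gF; rewrite !inE.
  case e1: ((ends g).1 \in S); case e2: ((ends g).2 \in S) => //.
  - exact: connect_adjA_eq (adjA_restrict_edge gF e1 e2).
  - have cr : crosses S g by rewrite /crosses e1 e2.
    have pe : ((ends g).1 == (ends g).1) || ((ends g).1 == (ends g).2) by rewrite eqxx.
    have [c1F ->] := crossing_reaches_a gF cr pe e1.
    by rewrite c1F.
  - have cr : crosses S g by rewrite /crosses e1 e2.
    have pe : ((ends g).2 == (ends g).1) || ((ends g).2 == (ends g).2) by rewrite eqxx orbT.
    have [c1F ->] := crossing_reaches_a gF cr pe e2.
    by rewrite c1F.
move=> /connectP[p pth ->].
have : val u \in Z by rewrite inE val_in_S val_lift_vert connect0.
elim: p (val u) pth => //= z p IH x /andP[/existsP[g /andP[gF /orP[]/eqP E]]] pth xZ;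
  apply: IH pth _; move: (step g gF); rewrite E /= => h; first [by rewrite -h | by rewrite h].
Qed.

Lemma connect_restrict_cover (u w : vert GS) :
  connect (adjA (restrict_cover F)) u w = connect (adjA F) (val u) (val w).
Proof.
apply/idP/idP; first exact: connect_restrict_up.
by move/connect_restrict_down; rewrite val_in_S val_lift_vert.
Qed.

Lemma connect_outside (u : vert GS) v : connect (adjA F) (val u) v -> v \notin S ->
  (c1 \in F) && connect (adjA F) a (val u).
Proof.
move=> /connect_restrict_down h vS; move: h; rewrite (negbTE vS) => /andP[-> /=].
by rewrite connect_restrict_cover connect_adjA_sym.
Qed.

Lemma card_comp_restrict_cover (u : vert GS) : #|[set w | connect (adjA (restrict_cover F)) u w]| =
  #|[set w | connect (adjA F) (val u) w] :&: S|.
Proof.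
rewrite -(card_imset _ val_inj); apply: eq_card => w; rewrite !inE.
apply/imsetP/idP => [[w' ]|/andP[cw wS]].
  by rewrite inE connect_restrict_cover => cw ->; rewrite cw val_in_S.
by exists (lift_vert w); rewrite ?inE ?connect_restrict_cover ?lift_vertK.
Qed.

Lemma ncyc_restrict_cover : ((ncyc (restrict_cover F))%:R =
  \sum_(v in S | (deg_in F v != 0) && ~~ ((c1 \in F) && connect (adjA F) a v))
     1 / (#|[set w | connect (adjA F) v w]|)%:R + ((c1 \in F) : nat)%:R :> rat)%R.
Proof.
rewrite ncyc_sum big_mkcond /=.
rewrite (eq_bigr (fun u : vert GS => (if deg_in F (val u) != 0 then
   1 / (#|[set w | connect (adjA F) (val u) w] :&: S|)%:R else 0)%R)); last first.
  by move=> u _; rewrite deg_restrict_cover // card_comp_restrict_cover.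
rewrite (big_sig (fun v => v \in ra_set S a b) (fun v => if deg_in F v != 0 then
   1 / (#|[set w | connect (adjA F) v w] :&: S|)%:R else 0)%R).
rewrite ra_set_id -big_mkcondr (bigID (fun v => (c1 \in F) && connect (adjA F) a v)) /= addrC.
congr (_ + _)%R.
  apply: eq_big => [v|v /andP[/andP[vS Dv] nQ]]; first by rewrite andbA.
  congr (1 / _%:R)%R; apply: eq_card => w; rewrite !inE; apply/andP/idP => [[]//|cw].
  split=> //; apply: contraNT nQ => wS.
  by have := @connect_outside (lift_vert v) w; rewrite lift_vertK //; apply.
case c1F: (c1 \in F); last by rewrite big_pred0 // => v; rewrite andbF.
have Da : deg_in F a != 0 by apply: (deg_in_neq0 c1F); rewrite c1_at_a // eqxx.
rewrite -[RHS](sum_comp_weight aS Da).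
by apply: eq_bigl => v; rewrite andTb andbA.
Qed.

Lemma sum_restrict_vert (f : vert G -> nat) : \sum_(u : vert GS) f (val u) = \sum_(v in S) f v.
Proof. by rewrite (big_sig (fun v => v \in ra_set S a b)) ra_set_id. Qed.

Lemma niso_restrict_cover : niso (restrict_cover F) = \sum_(v in S) (deg_in F v == 0 : nat).
Proof.
rewrite /niso card_set_sum -sum_restrict_vert; apply: eq_bigr => u _; by rewrite deg_restrict_cover.
Qed.

Lemma restrict_cover_even : is_even_cover (restrict_cover F).
Proof. by apply/forallP => u; rewrite deg_restrict_cover //; move/forallP: evF. Qed.

End Cover.

Lemma n_restrict : n_of GS = #|S|.
Proof. by rewrite /n_of card_sig ra_set_id; apply: eq_card. Qed.

Lemma n2_restrict : n2_of GS = \sum_(v in S) (deg v == 2 : nat).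
Proof.
rewrite /n2_of /deg card_set_sum -sum_restrict_vert; apply: eq_bigr => u _.
rewrite -(@deg_restrict_cover [set: edge G]) ?inE //.
by rewrite /deg_in; congr (_ == 2); apply: eq_bigl => -[o|]; rewrite !inE.
Qed.

Lemma restrict_cover_eq (F : {set edge G}) (F1 : {set edge GS}) :
  (forall s, (val s \in F) = ((Some s : edge GS) \in F1)) ->
  (c1 \in F) = ((None : edge GS) \in F1) -> restrict_cover F = F1.
Proof. by move=> h1 h2; apply/setP => -[s|]; rewrite inE. Qed.

End Restriction.

(** * Minimum excess *)

Lemma big_omin_spec (T : eqType) (r : seq T) (p : pred T) (h : T -> nat) :
  ((\big[omin/None]_(i <- r | p i) Some (h i) = None) -> forall i, i \in r -> p i -> False) /\
  (forall k, \big[omin/None]_(i <- r | p i) Some (h i) = Some k ->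
     (exists2 i, (i \in r) && p i & h i = k) /\ (forall i, i \in r -> p i -> k <= h i)).
Proof.
elim: r => [|j r [IH1 IH2]]; first by rewrite big_nil; split.
rewrite big_cons; case pj: (p j); last first.
  split=> [E i|k E]; first by rewrite inE => /orP[/eqP->|]; [rewrite pj | exact: IH1].
  have [[i ip hi] lo] := IH2 k E; split.
    by exists i; rewrite // inE; case/andP: ip => -> ->; rewrite orbT.
  by move=> i0; rewrite inE => /orP[/eqP->|]; [rewrite pj | exact: lo].
case E: (\big[omin/None]_(i <- r | p i) Some (h i)) => [k'|] /=; split => // k [<-].
  have [[i ip hi] lo] := IH2 k' E; split.
    case: (leqP (h j) k') => hk.
      by exists j; rewrite ?inE ?eqxx ?pj.
    exists i; first by rewrite inE; case/andP: ip => -> ->; rewrite orbT.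
    exact: hi.
  move=> i0; rewrite inE => /orP[/eqP->|ir pi]; first by rewrite geq_minl.
  exact: leq_trans (geq_minr _ _) (lo i0 ir pi).
split; first by exists j; rewrite ?inE ?eqxx ?pj.
move=> i; rewrite inE => /orP[/eqP->//|ir pi]; by case: (IH1 E i ir pi).
Qed.

Section MinExc.
Variable G : mgraph.
Implicit Types (F : {set edge G}) (P : pred {set edge G}).

Lemma minexc_none P : minexc P = None -> forall F, is_even_cover F -> P F -> False.
Proof.
move=> E F ev pF; have [h _] := big_omin_spec (index_enum {set edge G})
  (fun F => is_even_cover F && P F) (@exc G).
by apply: (h E F); rewrite ?mem_index_enum ?ev.
Qed.

Lemma minexc_some P k : minexc P = Some k ->
  (exists F, [/\ is_even_cover F, P F & exc F = k]) /\
  (forall F, is_even_cover F -> P F -> k <= exc F).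
Proof.
move=> E; have [_ h] := big_omin_spec (index_enum {set edge G})
  (fun F => is_even_cover F && P F) (@exc G).
have [[F /andP[_ /andP[ev pF]] ex] lo] := h k E; split; first by exists F.
by move=> F' ev' pF'; apply: lo; rewrite ?mem_index_enum ?ev'.
Qed.

Lemma minexc_eq_even P Q :
  (forall F, is_even_cover F -> P F = Q F) -> minexc P = minexc Q.
Proof.
move=> h; rewrite /minexc; apply: eq_bigl => F.
by case ev: (is_even_cover F) => //=; rewrite h.
Qed.
End MinExc.

Definition delta_b (G : mgraph) (e : edge G) (b : bool) : option rat :=
  omap (fun m : nat => (m%:R - (2 * b)%:R - base_val G)%R)
    (minexc (fun F => (e \in F) == b)).

Lemma delta_b_true (G : mgraph) (e : edge G) : delta e = delta_b e true.
Proof. by rewrite /delta /delta_b (@minexc_eq_even _ _ (fun F => (e \in F) == true)). Qed.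

Lemma delta_b_false (G : mgraph) (e : edge G) : deltahat e = delta_b e false.
Proof.
rewrite /deltahat /delta_b (@minexc_eq_even _ _ (fun F => (e \in F) == false)).
  by case: minexc => //= m; rewrite subr0.
by move=> F _; case: (e \in F).
Qed.

Lemma delta_b_eq_even (G : mgraph) (e e' : edge G) b :
  (forall F, is_even_cover F -> (e \in F) = (e' \in F)) -> delta_b e b = delta_b e' b.
Proof.
by move=> same; rewrite /delta_b (@minexc_eq_even _ _ (fun F => (e' \in F) == b))
  // => F ev; rewrite same.
Qed.

(** * Subcubic chains *)

Lemma notin_interior_l (G : mgraph) (VC : {set vert G}) (x y : vert G) :
  x \notin VC :\: [set x; y].
Proof. by rewrite !inE eqxx. Qed.

Lemma notin_interior_r (G : mgraph) (VC : {set vert G}) (x y : vert G) :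
  y \notin VC :\: [set x; y].
Proof. by rewrite !inE eqxx orbT. Qed.

Definition chain_boundary (G : mgraph) (VC : {set vert G}) (EC : {set edge G})
    (x y : vert G) (e0 ek : edge G) : Prop :=
  let I := VC :\: [set x; y] in
  let x1 := other_end e0 x in
  let yk := other_end ek y in
  [/\ x1 \in I /\ (ends e0 = (x, x1) \/ ends e0 = (x1, x)),
      yk \in I /\ (ends ek = (y, yk) \/ ends ek = (yk, y)),
      e0 != ek,
      forall g, crosses I g = (g == e0) || (g == ek) &
      forall g, (ends g).1 \in I -> (ends g).2 \in I -> g \in EC].

Section Chain.
Variables (G : mgraph) (VC : {set vert G}) (EC : {set edge G}) (x y : vert G)
  (e0 ek : edge G) (k : nat) (es : nat -> edge G) (Bs : nat -> {set vert G}).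
Local Notation CUT := [set g | is_cut_edge VC EC g].
Local Notation comp v := [set w | connect (adj_on VC (EC :\: CUT)) v w].
Local Notation I := (VC :\: [set x; y]).
Hypotheses
 (in_VC : forall g, g \in EC -> (ends g).1 \in VC /\ (ends g).2 \in VC)
 (k_gt0 : 0 < k) (es0 : es 0 = e0) (esk : es k = ek)
 (cut_es : forall g, is_cut_edge VC EC g <-> exists2 i, i <= k & g = es i)
 (comp_Bs : forall v, v \in VC -> exists2 i, i <= k.+1 & comp v = Bs i)
 (Bs_comp : forall i, i <= k.+1 -> exists2 v, v \in VC & Bs i = comp v)
 (Bs_inj : forall i j, i <= k.+1 -> j <= k.+1 -> Bs i = Bs j -> i = j)
 (Bs0 : Bs 0 = [set x]) (Bsk : Bs k.+1 = [set y])
 (es_join : forall i, i <= k ->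
         ((ends (es i)).1 \in Bs i /\ (ends (es i)).2 \in Bs i.+1) \/
         ((ends (es i)).2 \in Bs i /\ (ends (es i)).1 \in Bs i.+1))
 (interior_closed : forall g, g != e0 -> g != ek ->
         ((ends g).1 \in I) || ((ends g).2 \in I) ->
         [&& (ends g).1 \in I, (ends g).2 \in I & g \in EC]).

Lemma comp_B i v : i <= k.+1 -> v \in Bs i -> comp v = Bs i.
Proof.
move=> ik; have [w wVC ->] := Bs_comp ik; rewrite inE => h.
by rewrite (connect_set_eq (@adj_on_sym G VC _) h).
Qed.

Lemma B_index_uniq i j v : i <= k.+1 -> j <= k.+1 -> v \in Bs i -> v \in Bs j -> i = j.
Proof. by move=> ik jk vi vj; apply: Bs_inj => //; rewrite -(comp_B ik vi) (comp_B jk vj). Qed.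

Lemma B_sub_VC i v : i <= k.+1 -> v \in Bs i -> v \in VC.
Proof.
move=> ik; have [w wVC ->] := Bs_comp ik; rewrite inE => h.
exact: connect_on_mem h wVC.
Qed.

Lemma B_sub_interior i v : 0 < i <= k -> v \in Bs i -> v \in I.
Proof.
case/andP=> i0 ik vi; have ik1 : i <= k.+1 by apply: leq_trans ik _.
rewrite !inE (B_sub_VC ik1 vi) andbT; apply/norP; split; apply/eqP => E; subst v.
  have := B_index_uniq ik1 (leq0n _) vi; rewrite Bs0 inE eqxx => /(_ isT) E.
  by rewrite E in i0.
have := B_index_uniq ik1 (leqnn _) vi; rewrite Bsk inE eqxx => /(_ isT) E.
by rewrite E ltnn in ik.
Qed.

Lemma x_neq_y : x != y.
Proof.
apply/eqP => E; have := @B_index_uniq 0 k.+1 x (leq0n _) (leqnn _).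
by rewrite Bs0 Bsk E !inE eqxx => /(_ isT isT).
Qed.

Lemma e0_ends : other_end e0 x \in I /\
  (ends e0 = (x, other_end e0 x) \/ ends e0 = (other_end e0 x, x)).
Proof.
have B1I v : v \in Bs 1 -> v \in I by apply: B_sub_interior; rewrite k_gt0.
rewrite /other_end -es0; case: (es_join (leq0n k)) => [[]|[]]; rewrite Bs0 inE => /eqP E1 h2.
  by rewrite E1 eqxx (B1I _ h2); split => //; left; rewrite -E1 -surjective_pairing.
have h2' := B1I _ h2; case: eqP => [E|_].
  by rewrite E (negbTE (notin_interior_l _ _ _)) in h2'.
by rewrite h2'; split=> //; right; rewrite -E1 -surjective_pairing.
Qed.

Lemma ek_ends : other_end ek y \in I /\
  (ends ek = (y, other_end ek y) \/ ends ek = (other_end ek y, y)).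
Proof.
have BkI v : v \in Bs k -> v \in I by apply: B_sub_interior; rewrite k_gt0 leqnn.
rewrite /other_end -esk; case: (es_join (leqnn k)) => [[]|[]] h1; rewrite Bsk inE => /eqP E2.
  have h1' := BkI _ h1; case: eqP => [E|_].
    by rewrite E (negbTE (notin_interior_r _ _ _)) in h1'.
  by rewrite h1'; split=> //; right; rewrite -E2 -surjective_pairing.
by rewrite E2 eqxx (BkI _ h1); split => //; left; rewrite -E2 -surjective_pairing.
Qed.

Lemma e0_neq_ek : e0 != ek.
Proof.
apply/eqP => E; case: e0_ends => x1I hx; case: ek_ends => ykI hy.
have yI := notin_interior_r VC x y.
rewrite E in hx x1I.
case: hx => hx; case: hy => hy; rewrite hx in hy; case: hy => h1 h2;
  first [by move/eqP: x_neq_y; rewrite h1 | by move/eqP: x_neq_y; rewrite h2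
        | by move: x1I; rewrite h1 (negbTE yI) | by move: x1I; rewrite h2 (negbTE yI)].
Qed.

Lemma crosses_interior g : crosses I g = (g == e0) || (g == ek).
Proof.
rewrite /crosses; case: (eqVneq g e0) => [->|g0].
  by case: e0_ends => x1I [] ->; rewrite /= x1I (negbTE (notin_interior_l _ _ _)).
case: (eqVneq g ek) => [->|gk].
  by case: ek_ends => ykI [] ->; rewrite /= ykI (negbTE (notin_interior_r _ _ _)).
have := interior_closed g0 gk; case: ((ends g).1 \in I); case: ((ends g).2 \in I) => //=.
  by move=> /(_ isT).
by move=> /(_ isT).
Qed.

Lemma interior_edge_in_EC g : (ends g).1 \in I -> (ends g).2 \in I -> g \in EC.
Proof.
move=> h1 h2; have := crosses_interior g; rewrite /crosses h1 h2 => /esym/norP[g0 gk].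
by case/and3P: (interior_closed g0 gk (introT orP (or_introl h1))).
Qed.

Lemma chain_boundary_of : chain_boundary VC EC x y e0 ek.
Proof.
by split; [exact: e0_ends | exact: ek_ends | exact: e0_neq_ek
  | exact: crosses_interior | exact: interior_edge_in_EC].
Qed.

(* B_1 u ... u B_i: a vertex set left exactly through e0 and e_i. *)
Definition prefix i := [set v | [exists j : 'I_i.+1, (0 < j) && (v \in Bs j)]].
Lemma mem_prefix i j v : i <= k -> j <= k.+1 -> v \in Bs j -> (v \in prefix i) = (0 < j <= i).
Proof.
move=> ik jk vj; rewrite inE; apply/existsP/idP => [[j' /andP[j0 vj']]|/andP[j0 ji]].
  have j'k : j' <= k.+1 by have := ltn_ord j'; lia.
  by rewrite (B_index_uniq jk j'k vj vj') j0 -ltnS ltn_ord.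
by exists (Ordinal (ji : j < i.+1)); rewrite j0 vj.
Qed.

Lemma prefix_interior i v : i <= k -> v \in prefix i -> v \in I.
Proof.
move=> ik; rewrite inE => /existsP[j /andP[j0 vj]]; apply: (B_sub_interior (i := j)) vj.
by rewrite j0 (leq_trans _ ik) // -ltnS ltn_ord.
Qed.

Lemma crosses_prefix_es i j : 0 < i <= k -> j <= k ->
  crosses (prefix i) (es j) = (j == 0) || (j == i).
Proof.
case/andP=> i0 ik jk; have jk1 : j <= k.+1 by apply: leq_trans jk _.
rewrite /crosses; case: (es_join jk) => -[h1 h2];
  rewrite (mem_prefix ik jk1 h1) (mem_prefix ik (jk : j.+1 <= k.+1) h2);
  apply/idP/idP; lia.
Qed.

Lemma noncut_crosses_prefix i g : i <= k -> ~~ is_cut_edge VC EC g ->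
  ~~ crosses (prefix i) g.
Proof.
move=> ik ncg; apply/negP; rewrite /crosses => cr.
case gEC: (g \in EC).
  have [e1V e2V] := in_VC gEC.
  have [j jk cj] := comp_Bs e1V.
  have e1j : (ends g).1 \in Bs j by rewrite -cj inE connect0.
  have e2j : (ends g).2 \in Bs j.
    rewrite -cj inE connect1 // /adj_on e1V e2V; apply: adjA_ends.
    by rewrite !inE gEC (negbTE ncg).
  by move: cr; rewrite (mem_prefix ik jk e1j) (mem_prefix ik jk e2j) eqxx.
have cut_in_EC h : is_cut_edge VC EC h -> h \in EC by case/andP.
have g0 : g != e0.
  by apply: contraFneq gEC => ->; apply: cut_in_EC; apply/cut_es; exists 0.
have gk : g != ek.
  by apply: contraFneq gEC => ->; apply: cut_in_EC; apply/cut_es; exists k.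
have : ((ends g).1 \in I) || ((ends g).2 \in I).
  have : ((ends g).1 \in prefix i) || ((ends g).2 \in prefix i).
    by move: cr; case: ((ends g).1 \in prefix i); case: ((ends g).2 \in prefix i).
  by case/orP=> /(prefix_interior ik) ->; rewrite ?orbT.
by move/(interior_closed g0 gk) => /and3P[_ _]; rewrite gEC.
Qed.

Lemma crosses_prefix i g : 0 < i <= k -> crosses (prefix i) g = (g == e0) || (g == es i).
Proof.
move=> /[dup] ik /andP[i0 ik']; apply/idP/idP => [cr|].
  case cg: (is_cut_edge VC EC g).
    have [j jk gj] := (cut_es g).1 cg; move: cr; rewrite gj crosses_prefix_es //.
    by case/orP=> /eqP ->; rewrite -?es0 eqxx ?orbT.
  by rewrite (negbTE (noncut_crosses_prefix ik' (negbT cg))) in cr.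
by case/orP=> /eqP ->; rewrite -?es0 crosses_prefix_es ?eqxx ?orbT.
Qed.

Lemma cut_edge_in_cover F e : is_even_cover F -> is_cut_edge VC EC e ->
  (e \in F) = (e0 \in F).
Proof.
move=> ev /cut_es[i ik ->]; case: (posnP i) => [->|i0]; first by rewrite es0.
by symmetry; apply: (even_cover_crossing2 (S := prefix i)) => // g; rewrite crosses_prefix ?i0.
Qed.
End Chain.

Lemma subcubic_chain_boundary (G : mgraph) (VC : {set vert G}) (EC : {set edge G})
    (x y : vert G) (e0 ek : edge G) :
  subcubic_chain_of VC EC x y e0 ek -> chain_boundary VC EC x y e0 ek.
Proof.
case=> -[k [es [Bs [_ [k_gt0 es0 esk _] [_ Bs_comp Bs_inj [Bs0 Bsk _ es_join]]]]]] _ _ closed.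
exact: chain_boundary_of k_gt0 es0 esk Bs_comp Bs_inj Bs0 Bsk es_join closed.
Qed.

(* Parity forces every cut-edge of the chain to behave like e0 in an even cover. *)
Lemma subcubic_chain_cut_edge (G : mgraph) (VC : {set vert G}) (EC : {set edge G})
    (x y : vert G) (e0 ek e : edge G) (F : {set edge G}) :
  subcubic_chain_of VC EC x y e0 ek -> is_cut_edge VC EC e -> is_even_cover F ->
  (e \in F) = (e0 \in F).
Proof.
case=> -[k [es [Bs [[in_VC _ _ _ _] [k_gt0 es0 esk cut_es]
  [comp_Bs Bs_comp Bs_inj [Bs0 Bsk _ es_join]]]]]] _ _ closed ecut ev.
exact: cut_edge_in_cover in_VC k_gt0 es0 esk cut_es comp_Bs Bs_comp Bs_inj
  Bs0 Bsk es_join closed F e ev ecut.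
Qed.

(** * Splitting along a chain *)

Lemma incid_ends (G : mgraph) (g : edge G) p q v :
  ends g = (p, q) \/ ends g = (q, p) -> q != v -> incid g v = (v == p).
Proof. by move=> hg qv; rewrite /incid; case: hg => -> /=; rewrite (negbTE qv) ?addn0 eq_sym. Qed.

Section ChainSplit.
Variables (G : mgraph) (VC : {set vert G}) (EC : {set edge G}) (x y : vert G) (e0 ek : edge G).
Hypothesis boundary : chain_boundary VC EC x y e0 ek.
Local Notation I := (VC :\: [set x; y]).
Local Notation x1 := (other_end e0 x).
Local Notation yk := (other_end ek y).
Local Notation H := (restrict_add (~: I) [set: edge G] x y).
Local Notation K := (restrict_add I EC x1 yk).
Local Notation coverH F := (restrict_cover (~: I) [set: edge G] x y e0 F).
Local Notation coverK F := (restrict_cover I EC x1 yk e0 F).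

Let xI : x \notin I := notin_interior_l VC x y.
Let yI : y \notin I := notin_interior_r VC x y.
Let x1I : x1 \in I. Proof. by case: boundary => -[]. Qed.
Let e0_ends : ends e0 = (x, x1) \/ ends e0 = (x1, x). Proof. by case: boundary => -[]. Qed.
Let ykI : yk \in I. Proof. by case: boundary => _ []. Qed.
Let ek_ends : ends ek = (y, yk) \/ ends ek = (yk, y). Proof. by case: boundary => _ []. Qed.
Let e0_neq_ek : e0 != ek. Proof. by case: boundary. Qed.
Let crossK g : crosses I g = (g == e0) || (g == ek). Proof. by case: boundary => _ _ _ ->. Qed.
Let innerK g : (ends g).1 \in I -> (ends g).2 \in I -> g \in EC.
Proof. by case: boundary => _ _ _ _; apply. Qed.

Let xS : x \in ~: I. Proof. by rewrite in_setC. Qed.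
Let yS : y \in ~: I. Proof. by rewrite in_setC. Qed.
Let innerH g : (ends g).1 \in ~: I -> (ends g).2 \in ~: I -> g \in [set: edge G].
Proof. by rewrite in_setT. Qed.
Let crossH g : crosses (~: I) g = (g == e0) || (g == ek).
Proof. by rewrite -crossK /crosses !in_setC; case: (_ \in I); case: (_ \in I). Qed.

Let e0_H v : v \in ~: I -> incid e0 v = (v == x).
Proof. by rewrite in_setC => vI; apply: incid_ends e0_ends _; apply: contraNneq vI => <-. Qed.
Let ek_H v : v \in ~: I -> incid ek v = (v == y).
Proof. by rewrite in_setC => vI; apply: incid_ends ek_ends _; apply: contraNneq vI => <-. Qed.
Let e0_K v : v \in I -> incid e0 v = (v == x1).
Proof.
move=> vI; apply: (incid_ends (q := x)); last by apply: contraTneq vI => <-.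
by case: e0_ends => ->; [right|left].
Qed.
Let ek_K v : v \in I -> incid ek v = (v == yk).
Proof.
move=> vI; apply: (incid_ends (q := y)); last by apply: contraTneq vI => <-.
by case: ek_ends => ->; [right|left].
Qed.

Lemma even_cover_e0_ek F : is_even_cover F -> (e0 \in F) = (ek \in F).
Proof. by move=> ev; apply: (even_cover_crossing2 (S := I)). Qed.

Lemma coverH_even F : is_even_cover F -> is_even_cover (coverH F).
Proof.
move=> ev; exact: restrict_cover_even innerH xS yS crossH e0_neq_ek e0_H ek_H _ ev
  (even_cover_e0_ek ev).
Qed.

Lemma coverK_even F : is_even_cover F -> is_even_cover (coverK F).
Proof.
move=> ev; exact: restrict_cover_even innerK x1I ykI crossK e0_neq_ek e0_K ek_K _ ev
  (even_cover_e0_ek ev).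
Qed.

Lemma sum_interior_split (f : vert G -> nat) :
  \sum_v f v = \sum_(v in ~: I) f v + \sum_(v in I) f v.
Proof.
by rewrite (bigID (mem I)) /= addnC; congr (_ + _); apply: eq_bigl => v; rewrite !inE.
Qed.

Lemma niso_covers F : is_even_cover F -> niso F = niso (coverH F) + niso (coverK F).
Proof.
move=> ev; rewrite (niso_restrict_cover innerH xS yS crossH e0_neq_ek e0_H ek_H
  (even_cover_e0_ek ev)).
rewrite (niso_restrict_cover innerK x1I ykI crossK e0_neq_ek e0_K ek_K (even_cover_e0_ek ev)).
by rewrite /niso card_set_sum sum_interior_split.
Qed.

(* The cycle through e0 and ek is cut into two cycles, one in each part. *)
Lemma ncyc_covers F : is_even_cover F ->
  ncyc (coverH F) + ncyc (coverK F) = ncyc F + (e0 \in F).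
Proof.
move=> ev; apply/eqP; rewrite -(eqr_nat rat) !natrD.
rewrite (ncyc_restrict_cover innerH xS yS crossH e0_neq_ek e0_H ek_H ev (even_cover_e0_ek ev)).
rewrite (ncyc_restrict_cover innerK x1I ykI crossK e0_neq_ek e0_K ek_K ev (even_cover_e0_ek ev)).
have deg_x : (e0 \in F) -> deg_in F x != 0.
  by move=> e0F; apply: (deg_in_neq0 e0F); rewrite e0_H ?eqxx.
rewrite (ncyc_sum_without deg_x).
have conn_x1 v : (e0 \in F) && connect (adjA F) x1 v = (e0 \in F) && connect (adjA F) x v.
  case e0F: (e0 \in F) => //=.
  have : adjA F x x1 by have := adjA_ends e0F; case: e0_ends => -> //=; rewrite adjA_sym.
  by move/(connect_adjA_eq v); rewrite !(connect_adjA_sym _ v) => ->.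
have -> : (\sum_(v in I | (deg_in F v != 0) && ~~ ((e0 \in F) && connect (adjA F) x1 v))
    1 / #|[set w | connect (adjA F) v w]|%:R =
  \sum_(v in I | (deg_in F v != 0) && ~~ ((e0 \in F) && connect (adjA F) x v))
    1 / #|[set w | connect (adjA F) v w]|%:R :> rat)%R.
  by apply: eq_bigl => v; rewrite conn_x1.
apply/eqP; rewrite [X in (_ = X + _ + _)%R](bigID (mem I)) /=.
rewrite addrACA -[RHS]addrA; congr (_ + _)%R; rewrite addrC; congr (_ + _)%R.
  by apply: eq_bigl => v; rewrite andbC.
by apply: eq_bigl => v; rewrite !inE andbC.
Qed.

Lemma exc_covers F : is_even_cover F ->
  exc (coverH F) + exc (coverK F) = exc F + 2 * (e0 \in F).
Proof. by move=> ev; rewrite /exc (niso_covers ev); have := ncyc_covers ev; lia. Qed.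

Local Notation innerH_edge g :=
  ([&& g \in [set: edge G], (ends g).1 \in ~: I & (ends g).2 \in ~: I]).
Local Notation innerK_edge g := ([&& g \in EC, (ends g).1 \in I & (ends g).2 \in I]).

Let e0_not_innerH : innerH_edge e0 = false.
Proof. by case: e0_ends => ->; rewrite /= !in_setC x1I ?andbF. Qed.
Let ek_not_innerH : innerH_edge ek = false.
Proof. by case: ek_ends => ->; rewrite /= !in_setC ykI ?andbF. Qed.
Let e0_not_innerK : innerK_edge e0 = false.
Proof. by case: e0_ends => ->; rewrite /= (negbTE xI) ?andbF. Qed.
Let ek_not_innerK : innerK_edge ek = false.
Proof. by case: ek_ends => ->; rewrite /= (negbTE yI) ?andbF. Qed.

(* The inverse of F |-> (coverH F, coverK F): the new edges of H and K are replaced by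
   the pair e0, ek. *)
Definition glue (F1 : {set edge H}) (F2 : {set edge K}) : {set edge G} :=
  [set g | match (insub g : option {g | innerH_edge g}) with
           | Some s => (Some s : edge H) \in F1
           | None => match (insub g : option {g | innerK_edge g}) with
                     | Some s => (Some s : edge K) \in F2
                     | None => ((None : edge H) \in F1) && ((g == e0) || (g == ek))
                     end end].

Section Glue.
Variables (F1 : {set edge H}) (F2 : {set edge K}).

Lemma glue_e0 : (e0 \in glue F1 F2) = ((None : edge H) \in F1).
Proof. by rewrite inE insubF ?e0_not_innerH // insubF ?e0_not_innerK // eqxx /= andbT. Qed.

Lemma glue_ek : (ek \in glue F1 F2) = ((None : edge H) \in F1).
Proof. by rewrite inE insubF ?ek_not_innerH // insubF ?ek_not_innerK // eqxx orbT andbT. Qed.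

Lemma coverH_glue : coverH (glue F1 F2) = F1.
Proof. by apply: restrict_cover_eq => [s|]; rewrite ?glue_e0 // inE valK. Qed.

Lemma coverK_glue : ((None : edge H) \in F1) = ((None : edge K) \in F2) ->
  coverK (glue F1 F2) = F2.
Proof.
move=> same_new; apply: restrict_cover_eq => [s|]; last by rewrite glue_e0.
rewrite inE insubF ?valK //.
by have := valP s; case/and3P => _ h1 _; rewrite /= !in_setC h1 andbF.
Qed.

Lemma glue_even : is_even_cover F1 -> is_even_cover F2 ->
  ((None : edge H) \in F1) = ((None : edge K) \in F2) -> is_even_cover (glue F1 F2).
Proof.
move=> ev1 ev2 same_new; have e0_ek : (e0 \in glue F1 F2) = (ek \in glue F1 F2).
  by rewrite glue_e0 glue_ek.
apply/forallP => v; case vI: (v \in I).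
  have := deg_restrict_cover innerK x1I ykI crossK e0_neq_ek e0_K ek_K e0_ek
    (lift_vert I EC x1 yk v).
  by rewrite lift_vertK // coverK_glue // => <-; move/forallP: ev2.
have vS : v \in ~: I by rewrite in_setC vI.
have := deg_restrict_cover innerH xS yS crossH e0_neq_ek e0_H ek_H e0_ek
  (lift_vert (~: I) [set: edge G] x y v).
by rewrite lift_vertK // coverH_glue => <-; move/forallP: ev1.
Qed.
End Glue.

Lemma base_val_split : base_val G = (base_val H + base_val K)%R.
Proof.
rewrite /base_val (n_restrict [set: edge G] xS yS) (n_restrict EC x1I ykI).
rewrite (n2_restrict innerH xS yS crossH e0_neq_ek e0_H ek_H).
rewrite (n2_restrict innerK x1I ykI crossK e0_neq_ek e0_K ek_K).
have -> : n_of G = #|~: I| + #|I| by rewrite /n_of -(cardsC I) addnC.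
have -> : n2_of G = \sum_(v in ~: I) (deg v == 2 : nat) + \sum_(v in I) (deg v == 2 : nat).
  by rewrite /n2_of card_set_sum sum_interior_split.
by rewrite -mulrDl -natrD addnACA.
Qed.

Section MinimumExcess.
Variable b : bool.
Local Notation mG := (minexc (fun F : {set edge G} => (e0 \in F) == b)).
Local Notation mH := (minexc (fun F : {set edge H} => ((None : edge H) \in F) == b)).
Local Notation mK := (minexc (fun F : {set edge K} => ((None : edge K) \in F) == b)).

Lemma minexc_covers_le F p q : is_even_cover F -> (e0 \in F) == b ->
  mH = Some p -> mK = Some q -> p + q <= exc F + 2 * b.
Proof.
move=> ev /eqP e0F mHp mKq.
have [_ p_le] := minexc_some mHp; have [_ q_le] := minexc_some mKq.
have := p_le _ (coverH_even ev); have := q_le _ (coverK_even ev).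
rewrite !inE e0F eqxx => /(_ isT) hq /(_ isT) hp.
have := exc_covers ev; rewrite e0F; clear -hp hq; lia.
Qed.

Lemma minexc_split_Some p q : mH = Some p -> mK = Some q ->
  mG = Some (p + q - 2 * b) /\ 2 * b <= p + q.
Proof.
move=> mHp mKq.
have [[F1 [ev1 /eqP F1b ex1]] _] := minexc_some mHp.
have [[F2 [ev2 /eqP F2b ex2]] _] := minexc_some mKq.
have same_new : ((None : edge H) \in F1) = ((None : edge K) \in F2) by rewrite F1b F2b.
have ev := glue_even ev1 ev2 same_new.
have Fb : (e0 \in glue F1 F2) == b by rewrite glue_e0 F1b.
have ex := exc_covers ev; rewrite coverH_glue coverK_glue // ex1 ex2 (eqP Fb) in ex.
case mGm: mG => [m|]; last by case: (minexc_none mGm ev Fb).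
have [[F [evF Fb' <-]] m_le] := minexc_some mGm.
have := m_le _ ev Fb; have := minexc_covers_le evF Fb' mHp mKq.
by move: ex; case: b => /= ex hle hge; (split; [congr Some|]); clear -ex hle hge; lia.
Qed.

Lemma minexc_split_None : mH = None \/ mK = None -> mG = None.
Proof.
move=> none; case mGm: mG => [?|] //.
have [[F [ev Fb _]] _] := minexc_some mGm.
case: none => none.
  by case: (minexc_none none (coverH_even ev)); rewrite inE.
by case: (minexc_none none (coverK_even ev)); rewrite inE.
Qed.
End MinimumExcess.

Lemma delta_b_split b :
  delta_b e0 b = oaddq (delta_b (None : edge H) b) (delta_b (None : edge K) b).
Proof.
rewrite /delta_b base_val_split.
case mH: (minexc (fun F : {set edge H} => _)) => [p|] /=; last first.
  by rewrite minexc_split_None //; left.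
case mK: (minexc (fun F : {set edge K} => _)) => [q|] /=; last first.
  by rewrite minexc_split_None //; right.
have [-> le] := minexc_split_Some mH mK; congr Some.
by rewrite natrB // natrD; move: (base_val H) (base_val K) => u v; lra.
Qed.
End ChainSplit.

Theorem proposition2p2 (G : mgraph) (VC : {set vert G}) (EC : {set edge G})
    (x y : vert G) (e0 ek e : edge G) :
  subcubic_chain_of VC EC x y e0 ek ->
  is_cut_edge VC EC e ->
  delta e = oaddq (delta (e_contract VC x y)) (delta (e_closure VC EC x y e0 ek))
  /\
  deltahat e = oaddq (deltahat (e_contract VC x y)) (deltahat (e_closure VC EC x y e0 ek)).
Proof.
move=> chain ecut.
have status b : delta_b e b = delta_b e0 b.
  by apply: delta_b_eq_even => F; apply: subcubic_chain_cut_edge chain ecut.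
rewrite !delta_b_true !delta_b_false !status.
by rewrite !(delta_b_split (subcubic_chain_boundary chain)).
Qed.
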